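(* Let $1\le j\le k$. Let $\alpha=(\alpha_1,\dots,\alpha_j,0,\dots,0)\in\mathbb N^k$ (the last $k-j$ entries are zero) and $\beta=(\beta_1,\dots,\beta_k)\in\mathbb P^k$. Then for $t\ge0$ and $\mathrm{Re}(z)<0$, $$\phi\tbinom{\alpha}{\beta}(t)=\phi\tbinom{\alpha_1,\dots,\alpha_{j-1},\alpha_j}{\beta_1,\dots,\beta_{j-1},\beta_j+\beta_{j+1}+\cdots+\beta_k}(t)\;\cdot\;\phi\tbinom{0,\dots,0}{\beta_{j+1},\dots,\beta_k}(0).$$ Here the last factor has $k-j$ columns and is interpreted as $1$ when $j=k$.
   Context: $\mathbb P$ denotes the positive and $\mathbb N$ the nonnegative integers. Let $X=\{x_i:i\in\mathbb P\}$ be commuting indeterminates. For $\gamma\in\mathbb N^m$, $\mu\in\mathbb P^m$, real $t\ge0$ and complex $z$ with $\mathrm{Re}(z)<0$, define $$\phi\tbinom{\gamma}{\mu}(t)=\sum_{0<i_1<\cdots<i_m}x_{i_1}^{\gamma_1}\cdots x_{i_m}^{\gamma_m}e^{(i_1+t)\mu_1z}\cdots e^{(i_m+t)\mu_mz}.$$ The coefficient of each monomial in $X$ is an absolutely convergent series. The empty case $m=0$ gives $1$. *)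

From HB Require Import structures.
From mathcomp Require Import all_boot all_order all_algebra.
From mathcomp Require Import all_classical all_reals all_analysis.
From mathcomp Require Import complex.
Set Implicit Arguments. Unset Strict Implicit. Unset Printing Implicit Defensive.
Import Order.TTheory GRing.Theory Num.Theory.
Import numFieldNormedType.Exports.
Local Open Scope ring_scope.
Local Open Scope complex_scope.
Local Open Scope classical_set_scope.

Section Phi.
Variable R : realType.

Definition cexp (w : R[i]) : R[i] :=
  (expR (complex.Re w))%:C * ((cos (complex.Im w))%:C + 'i * (sin (complex.Im w))%:C).

Definition clim (u : nat -> R[i]) : R[i] :=
  (lim ((fun n => complex.Re (u n)) @ \oo)) +i* (lim ((fun n => complex.Im (u n)) @ \oo)).

Definition increasing (N m : nat) (s : m.-tuple 'I_N) : bool :=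
  sorted ltn [seq val k | k <- s] && all (fun k : 'I_N => (0 < val k)%N) s.

(* the monomial x_{i_1}^{g_1} ... x_{i_m}^{g_m}, as its exponent function:
   n |-> exponent of x_n *)
Definition mono (g : seq nat) (N : nat) (s : (size g).-tuple 'I_N) : nat -> nat :=
  fun n => (\sum_(l < size g) nth 0%N g l * (val (tnth s l) == n))%N.

Definition expterm (g mu : seq nat) (t : R) (z : R[i]) (N : nat)
    (s : (size g).-tuple 'I_N) : R[i] :=
  \prod_(l < size g) cexp (((val (tnth s l))%:R + t%:C) * (nth 0%N mu l)%:R * z).

Definition phi_partial (g mu : seq nat) (t : R) (z : R[i]) (M : nat -> nat)
    (N : nat) : R[i] :=
  \sum_(s : (size g).-tuple 'I_N.+1 | increasing s)
     (if `[< mono s = M >] then expterm mu t z s else 0).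

(* coefficient of the monomial M (given by its exponents: M n = exponent of
   x_n) in phi(g; mu)(t), i.e. the sum of the absolutely convergent series *)
Definition phi_coef (g mu : seq nat) (t : R) (z : R[i]) (M : nat -> nat) : R[i] :=
  clim (phi_partial g mu t z M).

End Phi.

(* Index the terms of phi(alpha; beta)(t) by the increasing sequences x = (i_1 < ... < i_k).
   Writing x as u = (i_1, ..., i_j) followed by an increasing sequence v of length k - j
   shifted by i_j is a bijection onto such pairs (u, v).  As alpha vanishes after position j,
   the monomial of x is that of u; and since i_(j+l) = i_j + v_l, the exponential factor of x
   is that of u, with last weight beta_j + ... + beta_k, times that of v at t = 0.  So the
   partial sum over i_k <= N of the left-hand side is the product of the partial sums of the
   two right-hand factors, minus the sum over the pairs with i_j + v_(k-j) > N.  Every term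
   has modulus at most e^(Re z (i_1 + ... + i_m)), so all these series converge and the
   correction is O(e^(N Re z / 2)); the identity follows in the limit. *)

From HB Require Import structures.
From mathcomp Require Import all_boot all_order all_algebra.
From mathcomp Require Import all_classical all_reals all_analysis.
From mathcomp Require Import complex.
From mathcomp Require Import ring zify.
Set Implicit Arguments. Unset Strict Implicit. Unset Printing Implicit Defensive.
Import Order.TTheory GRing.Theory Num.Theory.
Import numFieldNormedType.Exports.
Import Normc.
Local Open Scope ring_scope.
Local Open Scope complex_scope.
Local Open Scope classical_set_scope.

Section IncreasingSequences.
Local Open Scope nat_scope.

Fixpoint words (m N : nat) : seq (seq nat) :=
  if m is m'.+1 then [seq a :: w | a <- iota 1 N, w <- words m' N] else [:: [::]].

Definition incr_seqs (m N : nat) : seq (seq nat) :=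
  [seq x <- words m N | path ltn 0 x].

Lemma mem_words m N x :
  (x \in words m N) = (size x == m) && all (fun a => 0 < a <= N) x.
Proof.
elim: m x => [|m IH] x /=; first by rewrite inE; case: x.
apply/allpairsPdep/idP => [[a [w [aN wm ->]]]|].
  by move: aN wm; rewrite mem_iota IH /= => ? /andP [/eqP -> ->]; rewrite eqxx /=; lia.
case: x => [|a x] //= /andP [xm /andP [aN xN]].
by exists a, x; rewrite mem_iota IH -eqSS xm xN; split => //; lia.
Qed.

Lemma uniq_words m N : uniq (words m N).
Proof.
elim: m => [|m IH] //=.
by apply: allpairs_uniq => [||[a w] [b w'] _ _ [-> ->]] //; exact: iota_uniq.
Qed.

Lemma leq_path_last a s : path ltn a s -> a <= last a s.
Proof.
elim: s a => [|b s IH] a //= /andP [ab /IH].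
exact/leq_trans/ltnW.
Qed.

Lemma path_ltn_bounds a s : path ltn a s -> all (fun b => a < b <= last a s) s.
Proof.
elim: s a => [|b s IH] a //= /andP [ab bs].
rewrite ab leq_path_last //=; apply: sub_all (IH _ bs) => c /andP [bc ->].
by rewrite (ltn_trans ab bc).
Qed.

Lemma mem_incr_seqs m N x :
  (x \in incr_seqs m N) = [&& size x == m, path ltn 0 x & last 0 x <= N].
Proof.
rewrite mem_filter mem_words andbC -andbA.
have [px|] := boolP (path ltn 0 x); rewrite ?andbT ?andbF //; congr (_ && _).
apply/allP/idP => [xN|lN b /(allP (path_ltn_bounds px))].
  case/lastP: x px xN => //= x a _ /(_ a).
  by rewrite last_rcons mem_rcons mem_head => /(_ isT) /andP [].
by case/andP => -> /leq_trans ->.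
Qed.

Lemma uniq_incr_seqs m N : uniq (incr_seqs m N).
Proof. exact/filter_uniq/uniq_words. Qed.

Lemma perm_incr_seqs_le m N N' : N <= N' ->
  perm_eq (incr_seqs m N) [seq x <- incr_seqs m N' | last 0 x <= N].
Proof.
move=> NN'; apply: uniq_perm => [||x]; rewrite ?filter_uniq ?uniq_words //.
rewrite mem_incr_seqs mem_filter mem_incr_seqs andbC.
by case: (leqP (last 0 x) N) => [/leq_trans ->|]; rewrite ?andbF //= andbC.
Qed.

Definition cat_shift (u v : seq nat) : seq nat := u ++ map (addn (last 0 u)) v.

Lemma size_cat_shift u v : size (cat_shift u v) = size u + size v.
Proof. by rewrite size_cat size_map. Qed.

Lemma last_cat_shift u v : last 0 (cat_shift u v) = last 0 u + last 0 v.
Proof.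
rewrite /cat_shift; case/lastP: v => [|v b]; rewrite ?cats0 ?addn0 //.
by rewrite map_rcons last_cat !last_rcons.
Qed.

Lemma path_ltn_addn c a v : path ltn (c + a) (map (addn c) v) = path ltn a v.
Proof. by elim: v a => [|b v IH] a //=; rewrite IH ltn_add2l. Qed.

Lemma path_cat_shift u v :
  path ltn 0 (cat_shift u v) = path ltn 0 u && path ltn 0 v.
Proof. by rewrite cat_path -{1}[last 0 u]addn0 path_ltn_addn. Qed.

Lemma cat_shift_inj u u' v v' : size u = size u' ->
  cat_shift u v = cat_shift u' v' -> u = u' /\ v = v'.
Proof.
move=> uu' /eqP; rewrite eqseq_cat // => /andP [/eqP <- /eqP /(inj_map (@addnI _))].
by [].
Qed.

Lemma cat_shift_take_drop j x : path ltn 0 x ->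
  cat_shift (take j x) [seq b - last 0 (take j x) | b <- drop j x] = x.
Proof.
move=> px; rewrite /cat_shift -map_comp map_id_in ?cat_take_drop // => b bx /=.
move: px; rewrite -[x in path _ _ x](cat_take_drop j) cat_path.
by case/andP => _ /path_ltn_bounds /allP /(_ b bx); lia.
Qed.

Definition incr_pairs (j r N : nat) : seq (seq nat * seq nat) :=
  [seq (u, v) | u <- incr_seqs j N, v <- incr_seqs r N].

Lemma mem_incr_pairs j r N p :
  (p \in incr_pairs j r N) = (p.1 \in incr_seqs j N) && (p.2 \in incr_seqs r N).
Proof.
case: p => u v; apply/allpairsP/andP => [[[u' v'] [? ? [-> ->]]]|[? ?]] //.
by exists (u, v).
Qed.

Lemma perm_incr_seqs_cat_shift j r N :
  perm_eq (incr_seqs (j + r) N)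
    [seq cat_shift p.1 p.2 | p <- incr_pairs j r N & last 0 p.1 + last 0 p.2 <= N].
Proof.
apply: uniq_perm; first exact: uniq_incr_seqs.
  rewrite map_inj_in_uniq ?filter_uniq ?allpairs_uniq ?uniq_incr_seqs //.
    by move=> [u v] [u' v'] _ _ [-> ->].
  move=> [u v] [u' v']; rewrite !mem_filter !mem_incr_pairs !mem_incr_seqs /=.
  case/and3P => _ /and3P [/eqP su _ _] _ /and3P [_ /and3P [/eqP su' _ _] _].
  by move=> /cat_shift_inj [|-> ->] //; rewrite su su'.
move=> x; rewrite mem_incr_seqs; apply/and3P/mapP => [[/eqP sx px lx]|[[u v]]].
  set u := take j x; set v := [seq b - last 0 u | b <- drop j x].
  have xE : x = cat_shift u v by rewrite cat_shift_take_drop.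
  have su : size u = j by rewrite size_take sx; case: ltngtP; lia.
  exists (u, v) => //; move: sx px lx; rewrite mem_filter mem_incr_pairs !mem_incr_seqs xE.
  rewrite size_cat_shift path_cat_shift last_cat_shift su eqxx /= => /addnI -> /andP [-> ->]; lia.
rewrite mem_filter mem_incr_pairs !mem_incr_seqs /=.
case/and3P => lN /and3P [/eqP su pu _] /and3P [/eqP sv pv _] ->.
by rewrite size_cat_shift path_cat_shift last_cat_shift su sv pu pv eqxx.
Qed.

Lemma leq_last_sumn x : last 0 x <= sumn x.
Proof. by case/lastP: x => // x a; rewrite last_rcons sumn_rcons leq_addl. Qed.

Lemma perm_incr_seqs_tuples m N :
  perm_eq (incr_seqs m N)
    [seq map val (val s) | s <- enum (fun s : m.-tuple 'I_N.+1 => increasing s)].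
Proof.
apply: uniq_perm; first exact: uniq_incr_seqs.
  by rewrite map_inj_uniq ?enum_uniq // => s1 s2 /(inj_map val_inj) /val_inj.
move=> x; apply/idP/mapP => [|[s]]; last first.
  rewrite mem_enum /increasing => /andP [ss sN] ->.
  rewrite mem_filter mem_words size_map size_tuple eqxx all_map.
  case: s ss sN => -[|a y] //= _ -> /andP [-> yN] /=.
  by rewrite -ltnS ltn_ord; apply: sub_all yN => b /= ->; rewrite -ltnS ltn_ord.
rewrite mem_filter mem_words => /and3P [px /eqP sx xN].
have sxN : size (map (@inord N) x) == m by rewrite size_map sx.
have xE : map val (map (@inord N) x) = x.
  by rewrite -map_comp map_id_in // => a /(allP xN) /andP [_ aN] /=; rewrite inordK.
exists (Tuple sxN) => //; rewrite mem_enum unfold_in /increasing /= xE (path_sorted px).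
by rewrite all_map; apply: sub_all xN => a /andP [a0 aN] /=; rewrite inordK.
Qed.

End IncreasingSequences.

Section ZipSums.
Local Open Scope nat_scope.

Definition dot (s t : seq nat) : nat := \sum_(p <- zip s t) p.1 * p.2.

Definition mono_seq (g x : seq nat) (n : nat) : nat := \sum_(p <- zip g x) p.1 * (p.2 == n).

Lemma big_zip_nth (T : Type) (idx : T) (op : Monoid.law idx) (F : nat -> nat -> T)
    (s t : seq nat) : size s = size t ->
  \big[op/idx]_(p <- zip s t) F p.1 p.2 = \big[op/idx]_(l < size s) F (nth 0 s l) (nth 0 t l).
Proof.
move=> st; rewrite (big_nth (0, 0)) size_zip st minnn big_mkord.
by apply: eq_bigr => l _; rewrite nth_zip.
Qed.

Lemma sumn_nth_drop a s : \sum_(a <= l < size s) nth 0 s l = sumn (drop a s).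
Proof.
elim: s a => [|b s IH] a; first by rewrite big_geq.
by case: a => [|a]; [rewrite big_nat_recl | rewrite big_add1]; rewrite //= -/(size s) IH ?drop0.
Qed.

Lemma dot_cons a b s t : dot (a :: s) (b :: t) = a * b + dot s t.
Proof. by rewrite /dot /= big_cons. Qed.

Lemma dot_cat s1 s2 t1 t2 : size s1 = size t1 ->
  dot (s1 ++ s2) (t1 ++ t2) = dot s1 t1 + dot s2 t2.
Proof. by move=> st; rewrite /dot zip_cat // big_cat. Qed.

Lemma dot_map_addn c v t : size v = size t ->
  dot (map (addn c) v) t = c * sumn t + dot v t.
Proof.
elim: v t => [|a v IH] [|b t] // => [_|[vt]]; first by rewrite muln0.
by rewrite /= !dot_cons IH // mulnDl mulnDr addnACA.
Qed.

Lemma leq_sumn_dot s t : all (fun b => 0 < b) t -> size s <= size t -> sumn s <= dot s t.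
Proof.
elim: s t => [|a s IH] [|b t] //= /andP [b0 tpos] st.
by rewrite dot_cons leq_add ?leq_pmulr ?IH.
Qed.

Lemma dot_cat_shift u1 c v b1 b b2 : size u1 = size b1 -> size v = size b2 ->
  dot (cat_shift (rcons u1 c) v) (b1 ++ b :: b2)
  = dot (rcons u1 c) (rcons b1 (b + sumn b2)) + dot v b2.
Proof.
move=> su sv; rewrite /cat_shift last_rcons cat_rcons -!cats1 !dot_cat // !dot_cons.
by rewrite dot_map_addn // /dot big_nil mulnDr; lia.
Qed.

Lemma mono_seq_cat g1 g2 x1 x2 n : size g1 = size x1 ->
  mono_seq (g1 ++ g2) (x1 ++ x2) n = mono_seq g1 x1 n + mono_seq g2 x2 n.
Proof. by move=> gx; rewrite /mono_seq zip_cat // big_cat. Qed.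

Lemma mono_seq_nseq0 r x n : mono_seq (nseq r 0) x n = 0.
Proof.
elim: r x => [|r IH] [|a x]; rewrite /mono_seq /= ?big_nil ?big_cons //.
by rewrite -/(mono_seq _ _ n) IH.
Qed.

End ZipSums.

Section ComplexFacts.
Variable R : realType.
Implicit Types w : R[i].

Lemma cexpD w1 w2 : cexp (w1 + w2) = cexp w1 * cexp w2.
Proof.
case: w1 w2 => [a b] [c d]; rewrite /cexp /= expRD cosD sinD.
by apply/eqP; rewrite eq_complex /=; apply/andP; split; apply/eqP; ring.
Qed.

Lemma cexp0 : cexp 0 = 1 :> R[i].
Proof. by rewrite /cexp /= expR0 cos0 sin0 mulr0 addr0 !mul1r. Qed.

Lemma cexp_sum (I : Type) (r : seq I) (P : pred I) (F : I -> R[i]) :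
  cexp (\sum_(i <- r | P i) F i) = \prod_(i <- r | P i) cexp (F i).
Proof. exact: (big_morph _ cexpD cexp0). Qed.

Lemma normc_cexp w : normc (cexp w) = expR (complex.Re w).
Proof.
rewrite /cexp normcM /normc /= !expr0n /= !addr0 !mul0r !mul1r !subr0 !add0r addr0.
by rewrite cos2Dsin2 sqrtr1 mulr1 sqrtr_sqr gtr0_norm ?expR_gt0.
Qed.

Lemma ler_Re_normc w : `|complex.Re w| <= normc w.
Proof. by case: w => a b; rewrite /normc /= -sqrtr_sqr ler_wsqrtr // lerDl sqr_ge0. Qed.

Lemma ler_Im_normc w : `|complex.Im w| <= normc w.
Proof. by case: w => a b; rewrite /normc /= -sqrtr_sqr ler_wsqrtr // lerDr sqr_ge0. Qed.

Lemma normc_ge0 w : 0 <= normc w.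
Proof. by case: w => a b; exact: sqrtr_ge0. Qed.

Lemma Re_realcM (a : R) w : complex.Re (a%:C * w) = a * complex.Re w.
Proof. by case: w => b c /=; rewrite mul0r subr0. Qed.

Lemma ler_normc_sum (I : Type) (r : seq I) (P : pred I) (F : I -> R[i]) :
  normc (\sum_(i <- r | P i) F i) <= \sum_(i <- r | P i) normc (F i).
Proof. exact: (@ler_norm_sum _ (Rcomplex R)). Qed.

End ComplexFacts.

Section ComplexLimits.
Variable R : realType.
Implicit Types (u v : nat -> R[i]) (a b l w : R[i]).

Lemma cvg0_of_norm_le (u e : nat -> R) : e @ \oo --> 0 ->
  (forall n, `|u n| <= e n) -> u @ \oo --> 0.
Proof.
move=> e0 ue; apply/norm_cvg0P; apply: (squeeze_cvgr _ (cvg_cst 0) e0).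
by near=> n; rewrite normr_ge0 ue.
Unshelve. all: by end_near.
Qed.

Lemma cvgn_of_norm_le_tail (u e : nat -> R) : e @ \oo --> 0 ->
  (forall N M, (N <= M)%N -> `|u M - u N| <= e N) -> cvgn u.
Proof.
move=> e0 ue; apply/cauchy_cvgP/cauchy_exP => eps eps0.
have [N _ eN] := (cvgr0Pnorm_lt e).1 e0 eps eps0.
exists (u N), N => // n /= Nn; rewrite -ball_normE /= distrC.
exact: le_lt_trans (ue _ _ Nn) (le_lt_trans (ler_norm _) (eN N (leqnn N))).
Qed.

Definition ccvg_to u l : Prop :=
  (fun n => complex.Re (u n)) @ \oo --> complex.Re l /\
  (fun n => complex.Im (u n)) @ \oo --> complex.Im l.

Lemma clim_ccvg_to u l : ccvg_to u l -> clim u = l.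
Proof. by case: l => a b [] /= /cvg_lim ua /cvg_lim ub; rewrite /clim ua ?ub. Qed.

Lemma ccvg_toB u v a b : ccvg_to u a -> ccvg_to v b ->
  ccvg_to (fun n => u n - v n) (a - b).
Proof.
have ReB w w' : complex.Re (w - w') = complex.Re w - complex.Re w' by case: w w' => ? ? [].
have ImB w w' : complex.Im (w - w') = complex.Im w - complex.Im w' by case: w w' => ? ? [].
case=> ua ua' [vb vb']; split; rewrite (ReB, ImB).
  by under eq_fun do rewrite ReB; exact: cvgB.
by under eq_fun do rewrite ImB; exact: cvgB.
Qed.

Lemma ccvg_toM u v a b : ccvg_to u a -> ccvg_to v b ->
  ccvg_to (fun n => u n * v n) (a * b).
Proof.
have ReM w w' : complex.Re (w * w') =
  complex.Re w * complex.Re w' - complex.Im w * complex.Im w' by case: w w' => ? ? [].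
have ImM w w' : complex.Im (w * w') =
  complex.Re w * complex.Im w' + complex.Im w * complex.Re w' by case: w w' => ? ? [].
case=> ua ua' [vb vb']; split; rewrite (ReM, ImM).
  by under eq_fun do rewrite ReM; apply: cvgB; apply: cvgM.
by under eq_fun do rewrite ImM; apply: cvgD; apply: cvgM.
Qed.

Lemma ccvg_to0 u (e : nat -> R) : e @ \oo --> 0 ->
  (forall n, normc (u n) <= e n) -> ccvg_to u 0.
Proof.
move=> e0 ue; split; apply: (cvg0_of_norm_le e0) => n; apply: le_trans (ue n).
  exact: ler_Re_normc.
exact: ler_Im_normc.
Qed.

Lemma ccvg_to_cauchy u (e : nat -> R) : e @ \oo --> 0 ->
  (forall N M, (N <= M)%N -> normc (u M - u N) <= e N) -> ccvg_to u (clim u).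
Proof.
move=> e0 ue; split; apply: (cvgn_of_norm_le_tail e0) => N M /ue; apply: le_trans.
  by case: (u M) (u N) => a b [c d]; exact: (ler_Re_normc ((a +i* b) - (c +i* d))).
by case: (u M) (u N) => a b [c d]; exact: (ler_Im_normc ((a +i* b) - (c +i* d))).
Qed.

End ComplexLimits.

Section GeometricBounds.
Variables (R : realType) (q : R).
Hypotheses (q_ge0 : 0 <= q) (q_lt1 : q < 1).

Lemma sum_words_expr m N :
  \sum_(x <- words m N) q ^+ sumn x = (\sum_(a <- iota 1 N) q ^+ a) ^+ m.
Proof.
elim: m => [|m IH] /=; first by rewrite big_seq1.
rewrite big_allpairs_dep exprS -IH big_distrl; apply: eq_bigr => a _.
by rewrite big_distrr; apply: eq_bigr => w _; rewrite exprD.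
Qed.

Lemma sum_iota_expr_le N : \sum_(a <- iota 1 N) q ^+ a <= (1 - q)^-1.
Proof.
have geo : (1 - q) * \sum_(i < N.+1) q ^+ i = 1 - q ^+ N.+1.
  by rewrite -opprB mulNr -subrX1 opprB.
have sum_le : \sum_(i < N.+1) q ^+ i <= (1 - q)^-1.
  by rewrite -[X in _ <= X]mulr1 ler_pdivlMl ?subr_gt0 // geo lerBlDr lerDl exprn_ge0.
have -> : \sum_(a <- iota 1 N) q ^+ a = \sum_(i < N.+1) q ^+ i - 1.
  rewrite big_ord_recl expr0 addrAC subrr add0r.
  have -> : iota 1 N = index_iota 1 N.+1 by rewrite /index_iota subSS subn0.
  by rewrite big_add1 big_mkord.
by rewrite lerBlDr (le_trans sum_le) ?lerDl.
Qed.

Lemma sum_incr_seqs_expr_le m N :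
  \sum_(x <- incr_seqs m N) q ^+ sumn x <= (1 - q)^-1 ^+ m.
Proof.
apply: (@le_trans _ _ (\sum_(x <- words m N) q ^+ sumn x)).
  by rewrite big_filter big_mkcond ler_sum // => x _; case: ifP => // _; rewrite exprn_ge0.
rewrite sum_words_expr lerXn2r ?nnegrE ?sum_iota_expr_le ?invr_ge0 ?subr_ge0 ?(ltW q_lt1) //.
by rewrite sumr_ge0 // => a _; rewrite exprn_ge0.
Qed.

(* Terms are bounded by (q ^+ 2) ^+ sumn x: one factor q ^+ sumn x is summable over
   increasing sequences, the other yields the geometric tail q ^+ N. *)
Lemma expr_sqr_tail N n : (N < n)%N -> (q ^+ 2) ^+ n <= q ^+ N * q ^+ n.
Proof.
move=> Nn; rewrite -exprM mul2n -addnn exprD ler_wpM2r ?exprn_ge0 //.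
by rewrite ler_wiXn2l // ?ltW // ltnW.
Qed.

Lemma ccvg_to_sum_incr_seqs m (f : seq nat -> R[i]) :
  (forall x, size x = m -> normc (f x) <= (q ^+ 2) ^+ sumn x) ->
  ccvg_to (fun N => \sum_(x <- incr_seqs m N) f x)
          (clim (fun N => \sum_(x <- incr_seqs m N) f x)).
Proof.
have q_norm : `|q| < 1 by rewrite ger0_norm.
move=> hf; apply: (ccvg_to_cauchy (cvg_geometric ((1 - q)^-1 ^+ m) q_norm)) => N N' NN'.
rewrite (perm_big _ (perm_incr_seqs_le m NN')) [X in _ - X]big_filter.
rewrite [X in X - _](bigID (fun x => last 0 x <= N)%N) /= addrAC subrr add0r.
apply: le_trans (ler_normc_sum _ _ _) _.
apply: (@le_trans _ _ (\sum_(x <- incr_seqs m N') q ^+ N * q ^+ sumn x)).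
  rewrite big_mkcond big_seq [X in _ <= X]big_seq; apply: ler_sum => x.
  rewrite mem_incr_seqs -ltnNge => /and3P [/eqP sx _ _]; case: ifP => [lN | _].
    exact: le_trans (hf x sx) (expr_sqr_tail (leq_trans lN (leq_last_sumn x))).
  by rewrite mulr_ge0 ?exprn_ge0.
rewrite -mulr_sumr /geometric /= [X in _ <= X]mulrC ler_wpM2l ?exprn_ge0 //.
exact: sum_incr_seqs_expr_le.
Qed.

Lemma normc_sum_tail_pairs j r N (a c : seq nat -> R[i]) :
  (forall u, size u = j -> normc (a u) <= (q ^+ 2) ^+ sumn u) ->
  (forall v, size v = r -> normc (c v) <= (q ^+ 2) ^+ sumn v) ->
  normc (\sum_(p <- incr_pairs j r N | (N < last 0 p.1 + last 0 p.2)%N) a p.1 * c p.2)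
  <= (1 - q)^-1 ^+ j * (1 - q)^-1 ^+ r * q ^+ N.
Proof.
move=> ha hc; apply: le_trans (ler_normc_sum _ _ _) _.
apply: (@le_trans _ _ (\sum_(p <- incr_pairs j r N) q ^+ N * (q ^+ sumn p.1 * q ^+ sumn p.2))).
  rewrite big_mkcond big_seq [X in _ <= X]big_seq; apply: ler_sum => -[u v].
  rewrite mem_incr_pairs !mem_incr_seqs => /andP [/and3P [/eqP su _ _] /and3P [/eqP sv _ _]] /=.
  case: ifP => [lN | _]; last by rewrite !mulr_ge0 ?exprn_ge0.
  rewrite normcM; apply: le_trans (ler_pM (normc_ge0 _) (normc_ge0 _) (ha u su) (hc v sv)) _.
  rewrite -!exprD [X in _ <= X]exprD; apply: expr_sqr_tail.
  exact: leq_trans lN (leq_add (leq_last_sumn u) (leq_last_sumn v)).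
rewrite -mulr_sumr /incr_pairs big_allpairs /= -big_distrlr /= mulrC ler_wpM2r ?exprn_ge0 //.
by rewrite ler_pM ?sumr_ge0 ?sum_incr_seqs_expr_le // => x _; rewrite exprn_ge0.
Qed.

End GeometricBounds.

Lemma sum_incr_seqs_cat_shift (V : comPzRingType) j r N (f a c : seq nat -> V) :
  {in incr_seqs j N & incr_seqs r N, forall u v, f (cat_shift u v) = a u * c v} ->
  \sum_(x <- incr_seqs (j + r) N) f x
  = (\sum_(u <- incr_seqs j N) a u) * (\sum_(v <- incr_seqs r N) c v)
    - \sum_(p <- incr_pairs j r N | (N < last 0 p.1 + last 0 p.2)%N) a p.1 * c p.2.
Proof.
move=> fac; rewrite (perm_big _ (perm_incr_seqs_cat_shift j r N)) big_map big_filter.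
rewrite [X in _ = X - _](_ : _ = \sum_(p <- incr_pairs j r N) a p.1 * c p.2); last first.
  by rewrite /incr_pairs big_allpairs big_distrlr.
under [X in _ = _ - X]eq_bigl => p do rewrite ltnNge.
rewrite [X in _ = X - _](bigID (fun p => last 0 p.1 + last 0 p.2 <= N)%N) /= addrK.
rewrite big_seq_cond [RHS]big_seq_cond; apply: eq_bigr => -[u v] /andP [].
by rewrite mem_incr_pairs => /andP [uj vr] _; exact: fac.
Qed.

Section PhiCoefficients.
Variables (R : realType) (z : R[i]).

(* The term of index x = (i_1 < ... < i_m) of phi(g; mu)(t), as a single exponential;
   [dot] truncates to the shorter sequence, so this is faithful only when size x = size mu. *)
Definition coef_term (g mu : seq nat) (t : R) (M : nat -> nat) (x : seq nat) : R[i] :=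
  if `[< mono_seq g x = M >] then cexp (((dot x mu)%:R + t * (sumn mu)%:R)%:C * z) else 0.

Lemma nth_map_val_tuple m N (s : m.-tuple 'I_N) (l : 'I_m) :
  nth 0%N (map val s) l = val (tnth s l).
Proof. by rewrite -(tnth_map val) (tnth_nth 0%N). Qed.

Lemma mono_tuple g N (s : (size g).-tuple 'I_N) : mono s = mono_seq g (map val s).
Proof.
apply/funext => n.
rewrite /mono_seq (big_zip_nth _ (fun a b => a * (b == n))%N) ?size_map ?size_tuple //.
by apply: eq_bigr => l _; rewrite nth_map_val_tuple.
Qed.

Lemma expterm_tuple g mu t N (s : (size g).-tuple 'I_N) : size mu = size g ->
  expterm mu t z s = cexp (((dot (map val s) mu)%:R + t * (sumn mu)%:R)%:C * z).
Proof.
move=> smu; rewrite /expterm -cexp_sum -mulr_suml; congr (cexp (_ * z)).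
rewrite /dot (big_zip_nth _ muln) ?size_map ?size_tuple // sumnE (big_nth 0%N) big_mkord.
rewrite smu !natr_sum mulr_sumr -big_split rmorph_sum /=.
apply: eq_bigr => l _; rewrite nth_map_val_tuple rmorphD.
by rewrite !rmorphM /= !rmorph_nat mulrDl.
Qed.

Lemma phi_partial_incr_seqs g mu t M N : size mu = size g ->
  phi_partial g mu t z M N = \sum_(x <- incr_seqs (size g) N) coef_term g mu t M x.
Proof.
move=> smu; rewrite /phi_partial (perm_big _ (perm_incr_seqs_tuples _ _)) big_map big_enum /=.
by apply: eq_bigr => s _; rewrite /coef_term mono_tuple expterm_tuple.
Qed.

Lemma coef_term_cat_shift g b1 b b2 t M u v :
  size u = size g -> size u = (size b1).+1 -> size v = size b2 ->
  coef_term (g ++ nseq (size b2) 0%N) (b1 ++ b :: b2) t M (cat_shift u v)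
  = coef_term g (rcons b1 (b + sumn b2)) t M u
    * coef_term (nseq (size b2) 0%N) b2 0 (fun=> 0%N) v.
Proof.
case/lastP: u => // u1 c; rewrite size_rcons /coef_term => sg [sb1] sv.
have -> : mono_seq (g ++ nseq (size b2) 0%N) (cat_shift (rcons u1 c) v) = mono_seq g (rcons u1 c).
  by apply/funext => n; rewrite /cat_shift mono_seq_cat ?size_rcons // mono_seq_nseq0 addn0.
have -> : mono_seq (nseq (size b2) 0%N) v = fun=> 0%N.
  by apply/funext => n; rewrite mono_seq_nseq0.
rewrite (asboolT (erefl (fun=> 0%N))); case: asboolP => _; last by rewrite mul0r.
rewrite -cexpD -mulrDl -rmorphD dot_cat_shift // sumn_cat sumn_rcons /= natrD.
by congr (cexp (_%:C * z)); ring.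
Qed.

Lemma phi_partial_cat_zeros g b1 b b2 t M N : size g = (size b1).+1 ->
  phi_partial (g ++ nseq (size b2) 0%N) (b1 ++ b :: b2) t z M N
  = phi_partial g (rcons b1 (b + sumn b2)) t z M N
    * phi_partial (nseq (size b2) 0%N) b2 0 z (fun=> 0%N) N
    - \sum_(p <- incr_pairs (size g) (size b2) N | (N < last 0 p.1 + last 0 p.2)%N)
        coef_term g (rcons b1 (b + sumn b2)) t M p.1
        * coef_term (nseq (size b2) 0%N) b2 0 (fun=> 0%N) p.2.
Proof.
move=> sg; rewrite !phi_partial_incr_seqs ?size_rcons ?size_cat ?size_nseq /= ?sg ?addnS //.
apply: sum_incr_seqs_cat_shift => u v.
rewrite !mem_incr_seqs => /and3P [/eqP su _ _] /and3P [/eqP sv _ _].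
by apply: coef_term_cat_shift; rewrite ?su ?sg.
Qed.

Hypothesis Re_z_lt0 : complex.Re z < 0.

Let q := expR (complex.Re z / 2).

Let q_ge0 : 0 <= q. Proof. exact: expR_ge0. Qed.

Let q_lt1 : q < 1.
Proof. by rewrite expR_lt1 pmulr_llt0 // invr_gt0. Qed.

Let q_sqr : q ^+ 2 = expR (complex.Re z).
Proof. by rewrite -expRM_natl mulrC divfK ?pnatr_eq0. Qed.

Lemma normc_coef_term_le g mu t M x :
  0 <= t -> all (fun b => 0 < b)%N mu -> (size x <= size mu)%N ->
  normc (coef_term g mu t M x) <= (q ^+ 2) ^+ sumn x.
Proof.
move=> t0 mu_pos sx; rewrite /coef_term; case: ifP => _; last first.
  by rewrite normc0 exprn_ge0 ?sqr_ge0.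
rewrite normc_cexp Re_realcM q_sqr -expRM_natl ler_expR; apply: ler_wnM2r; first exact: ltW.
by rewrite -[X in X <= _]addr0 lerD ?mulr_ge0 // ler_nat leq_sumn_dot.
Qed.

Lemma ccvg_to_phi_partial g mu t M :
  0 <= t -> all (fun b => 0 < b)%N mu -> size mu = size g ->
  ccvg_to (phi_partial g mu t z M) (phi_coef g mu t z M).
Proof.
move=> t0 mu_pos smu; rewrite /phi_coef.
have -> : phi_partial g mu t z M = fun N => \sum_(x <- incr_seqs (size g) N) coef_term g mu t M x.
  by apply/funext => N; rewrite phi_partial_incr_seqs.
refine (ccvg_to_sum_incr_seqs q_ge0 q_lt1 (fun x sx => _)).
by apply: normc_coef_term_le; rewrite ?sx ?smu.
Qed.

Lemma phi_coef_cat_zeros g b1 b b2 t M :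
  0 <= t -> size g = (size b1).+1 -> all (fun b => 0 < b)%N (b1 ++ b :: b2) ->
  phi_coef (g ++ nseq (size b2) 0%N) (b1 ++ b :: b2) t z M
  = phi_coef g (rcons b1 (b + sumn b2)) t z M
    * phi_coef (nseq (size b2) 0%N) b2 0 z (fun=> 0%N).
Proof.
move=> t0 sg; rewrite all_cat /= => /and3P [b1_pos b_pos b2_pos].
have mu_pos : all (fun b => 0 < b)%N (rcons b1 (b + sumn b2)).
  by rewrite -cats1 all_cat b1_pos /= addn_gt0 b_pos.
have ha u : size u = size g ->
    normc (coef_term g (rcons b1 (b + sumn b2)) t M u) <= (q ^+ 2) ^+ sumn u.
  by move=> su; apply: normc_coef_term_le; rewrite ?size_rcons ?su ?sg.
have hc v : size v = size b2 ->
    normc (coef_term (nseq (size b2) 0%N) b2 0 (fun=> 0%N) v) <= (q ^+ 2) ^+ sumn v.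
  by move=> sv; apply: normc_coef_term_le; rewrite ?sv.
have q_norm : `|q| < 1 by rewrite ger0_norm.
have tail0 := ccvg_to0 (cvg_geometric _ q_norm) (fun N => normc_sum_tail_pairs q_ge0 q_lt1 N ha hc).
apply: clim_ccvg_to; rewrite (funext (fun N => phi_partial_cat_zeros b b2 t M N sg)).
rewrite -[X in ccvg_to _ X]subr0; apply: ccvg_toB tail0.
by apply: ccvg_toM; apply: ccvg_to_phi_partial; rewrite ?size_rcons ?size_nseq ?sg.
Qed.

End PhiCoefficients.

Theorem lemma3p7 (R : realType) (k j : nat) (alpha beta : seq nat)
    (t : R) (z : R[i]) :
  (1 <= j <= k)%N ->
  size alpha = k -> size beta = k ->
  (forall l : nat, (j <= l < k)%N -> nth 0%N alpha l = 0%N) ->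
  all (fun b => 0 < b)%N beta ->
  0 <= t -> complex.Re z < 0 ->
  forall M : nat -> nat,
    phi_coef alpha beta t z M =
    phi_coef (take j alpha)
             (rcons (take j.-1 beta) (\sum_(j.-1 <= l < k) nth 0%N beta l)%N) t z M
    * phi_coef (nseq (k - j) 0%N) (drop j beta) 0 z (fun _ => 0%N).
Proof.
move=> /andP [j_gt0 jk] sa sb alpha0 beta_pos t0 Re_z_lt0 M.
have r_eq : (k - j)%N = size (drop j beta) by rewrite size_drop sb.
have alphaE : alpha = take j alpha ++ nseq (k - j) 0%N.
  rewrite -[LHS](cat_take_drop j); congr cat; apply: (@eq_from_nth _ 0%N).
    by rewrite size_drop size_nseq sa.
  by move=> l; rewrite size_drop sa nth_nseq if_same nth_drop => lr; rewrite alpha0 //; lia.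
have betaE : beta = take j.-1 beta ++ nth 0%N beta j.-1 :: drop j beta.
  by rewrite -[in drop j _](prednK j_gt0) -drop_nth ?cat_take_drop // sb prednK.
have j1_lt : (j.-1 < k)%N by case: (j) j_gt0 jk.
rewrite {1}alphaE {1}betaE r_eq -sb sumn_nth_drop [drop j.-1 _](drop_nth 0%N) ?sb //.
rewrite prednK // phi_coef_cat_zeros -?betaE ?sa //.
by rewrite size_takel ?sa // size_takel ?prednK // sb ltnW.
Qed.
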